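(* Let $T$ be a non-meagre subset with the Baire property of a metric space $X$, and let $G$ be a normed group, Baire in its norm topology, acting separately continuously and transitively on $X$ with the Nikodym property. Then for every convergent sequence $x_n\to x_0$ in $X$ there exist $\tau\in G$ and an integer $N$ such that $\tau x_0\in T$ and \[\{\tau(x_n):n>N\}\subseteq T.\]
   Context: A normed group is a group with a group-norm $\|\cdot\|$ (subadditive, $\|t\|>0$ for $t\ne e_G$, $\|e_G\|=0$, $\|t^{-1}\|=\|t\|$); its norm topology is that of $d_R(s,t)=\|st^{-1}\|$. A separately continuous action $\varphi:G\times X\to X$ ($\varphi(e_G,x)=x$, $\varphi(gh,x)=\varphi(g,\varphi(h,x))$, write $gx=g(x)=\varphi(g,x)$) has $x\mapsto g(x)$ continuous for each $g$ and $g\mapsto g(x)$ continuous for each $x$; transitive means for all $x,y$ some $g$ has $g(x)=y$. Nikodym property: for every non-empty open neighbourhood $U$ of $e_G$ and every $x$, $Ux=\{u(x):u\in U\}$ contains a non-meagre set with the Baire property. *)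

From HB Require Import structures.
From mathcomp Require Import all_boot all_order all_algebra.
From mathcomp Require Import all_classical all_reals all_analysis.
Set Implicit Arguments. Unset Strict Implicit. Unset Printing Implicit Defensive.
Import Order.TTheory GRing.Theory Num.Theory.
Local Open Scope classical_set_scope.
Local Open Scope ring_scope.

(** Topological notions relative to an explicit family [op] of open sets.
    Used with [op := open] for a topological space, and with the norm
    topology (below) for a normed group. *)
Section OpenFamily.
Variables (T : Type) (op : set T -> Prop).

Definition interior_op (A : set T) : set T :=
  [set x | exists U, [/\ op U, U `<=` A & U x]].
Definition closure_op (A : set T) : set T := ~` interior_op (~` A).
Definition nowhere_dense_op (A : set T) : Prop :=
  interior_op (closure_op A) = set0.
Definition meagre_op (A : set T) : Prop :=
  exists F : nat -> set T,
    (forall n, nowhere_dense_op (F n)) /\ A `<=` \bigcup_n F n.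
Definition baire_property_op (A : set T) : Prop :=
  exists U, op U /\ meagre_op ((A `\` U) `|` (U `\` A)).
Definition dense_op (D : set T) : Prop :=
  forall U, op U -> U !=set0 -> (U `&` D) !=set0.
Definition baire_space_op : Prop :=
  forall F : nat -> set T, (forall n, op (F n) /\ dense_op (F n)) ->
    dense_op (\bigcap_n F n).
End OpenFamily.

Record normedGroup (R : realType) := NormedGroup {
  ng_carrier :> Type;
  ng_mul : ng_carrier -> ng_carrier -> ng_carrier;
  ng_inv : ng_carrier -> ng_carrier;
  ng_one : ng_carrier;
  ng_norm : ng_carrier -> R;
  ng_mulA : forall a b c, ng_mul a (ng_mul b c) = ng_mul (ng_mul a b) c;
  ng_mul1g : forall a, ng_mul ng_one a = a;
  ng_mulg1 : forall a, ng_mul a ng_one = a;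
  ng_mulVg : forall a, ng_mul (ng_inv a) a = ng_one;
  ng_mulgV : forall a, ng_mul a (ng_inv a) = ng_one;
  ng_norm_subadd : forall s t, ng_norm (ng_mul s t) <= ng_norm s + ng_norm t;
  ng_norm_gt0 : forall t, t <> ng_one -> 0 < ng_norm t;
  ng_norm1 : ng_norm ng_one = 0;
  ng_normV : forall t, ng_norm (ng_inv t) = ng_norm t
}.

Section NormTopology.
Variables (R : realType) (G : normedGroup R).
Definition dR (s t : G) : R := ng_norm (ng_mul s (ng_inv t)).
Definition norm_open (U : set G) : Prop :=
  forall s, U s -> exists2 r : R, 0 < r & forall t, dR t s < r -> U t.
End NormTopology.

Section Action.
Variables (R : realType) (G : normedGroup R) (X : topologicalType)
  (phi : G -> X -> X).
Definition is_action : Prop :=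
  (forall x, phi (ng_one G) x = x) /\
  (forall g h x, phi (ng_mul g h) x = phi g (phi h x)).
Definition separately_continuous : Prop :=
  (forall g, continuous (phi g)) /\
  (forall x (V : set X), open V -> norm_open (fun g => V (phi g x))).
Definition transitive_action : Prop :=
  forall x y, exists g, phi g x = y.
Definition nikodym_property : Prop :=
  forall (U : set G), norm_open U -> U (ng_one G) ->
  forall x, exists B : set X,
    B `<=` [set phi u x | u in U] /\
    ~ meagre_op open B /\ baire_property_op open B.
End Action.

From HB Require Import structures.
From mathcomp Require Import all_boot all_order all_algebra.
From mathcomp Require Import all_classical all_reals all_analysis.
Set Implicit Arguments. Unset Strict Implicit. Unset Printing Implicit Defensive.

Local Open Scope classical_set_scope.
Local Open Scope ring_scope.

(* Write T = U up to the meagre set covered by nowhere dense F_k, and let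
   C_k be the (open, dense) interior of the complement of F_k.  For every
   point y of the sequence x_n together with x0, the set of g with g y in C_k
   is open by separate continuity and dense by the Nikodym property: were an
   open set O around h disjoint from it, the non-meagre subset of (O h^-1) h y
   given by that property would lie in the nowhere dense closure of F_k.  The set of g with g x0 in U is open and, by transitivity, nonempty.
   Baire category yields tau in all these sets; then tau x_n -> tau x0 in U,
   so eventually tau x_n lies in U and in no F_k, hence in T. *)

Section OpenFamilyBaire.
Variables (T : Type) (op : set T -> Prop).
Hypothesis op_setT : op setT.

Lemma baire_dense_bigcap (I : countType) (F : I -> set T) :
  baire_space_op op -> (forall i, op (F i) /\ dense_op op (F i)) ->
  dense_op op (\bigcap_i F i).
Proof.
move=> baireT odF.
pose Fn (m : nat) := if unpickle m is Some i then F i else setT.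
have odFn m : op (Fn m) /\ dense_op op (Fn m).
  rewrite /Fn; case: (unpickle m) => [i|]; first exact: odF.
  by split => // O _ [s Os]; exists s.
move=> O oO O0; have [s [Os Fs]] := baireT Fn odFn O oO O0.
exists s; split => // i _; have := Fs (pickle i) Logic.I.
by rewrite /Fn pickleK.
Qed.

End OpenFamilyBaire.

Section InteriorClosure.
Variable X : topologicalType.
Implicit Types A B : set X.

Lemma open_interior_op A : open (interior_op open A).
Proof.
have -> : interior_op open A = \bigcup_(U in [set U | open U /\ U `<=` A]) U.
  apply/seteqP; split => x; first by case=> U [oU UA Ux]; exists U.
  by case=> U [oU UA] Ux; exists U.
by apply: bigcup_open => U [].
Qed.

Lemma interior_op_sub A : interior_op open A `<=` A.
Proof. by move=> x [U [_ UA Ux]]; apply: UA. Qed.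

Lemma subset_interior_op A B : A `<=` B -> interior_op open A `<=` interior_op open B.
Proof. by move=> AB x [U [oU UA Ux]]; exists U; split => //; apply: subset_trans AB. Qed.

Lemma nowhere_dense_closure_op A :
  nowhere_dense_op open A -> nowhere_dense_op open (closure_op open A).
Proof.
rewrite /nowhere_dense_op => ndA; apply/seteqP; split => // x.
rewrite -ndA; apply: subset_interior_op => y ncly Ay; apply: ncly.
exists (interior_op open (~` A)); split => //; first exact: open_interior_op.
by move=> z Iz; apply.
Qed.

Lemma nowhere_dense_meagre_op A : nowhere_dense_op open A -> meagre_op open A.
Proof. by move=> ndA; exists (fun=> A); split => // x Ax; exists 0%N. Qed.

Lemma meagre_op_sub A B : A `<=` B -> meagre_op open B -> meagre_op open A.
Proof. by move=> AB [F [ndF BF]]; exists F; split => //; apply: subset_trans BF. Qed.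

End InteriorClosure.

Section NormedGroupTranslation.
Variables (R : realType) (G : normedGroup R).

Lemma dR_mulr (s t h : G) : dR (ng_mul s h) (ng_mul t h) = dR s t.
Proof.
rewrite /dR -[in LHS](ng_mulg1 s) -(ng_mulVg t) !ng_mulA -!ng_mulA.
by rewrite [ng_mul t (ng_mul h _)]ng_mulA ng_mulgV ng_mulg1.
Qed.

Lemma norm_open_setT : norm_open (@setT G).
Proof. by move=> s _; exists 1. Qed.

Lemma norm_open_mulr (O : set G) (h : G) :
  norm_open O -> norm_open [set g | O (ng_mul g h)].
Proof.
move=> oO g /oO [r r0 Or]; exists r => // t dtg.
by apply: Or; rewrite dR_mulr.
Qed.

End NormedGroupTranslation.

Section NikodymAction.
Variables (R : realType) (G : normedGroup R) (X : topologicalType)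
  (phi : G -> X -> X).
Hypotheses (phi_action : is_action phi) (phi_nikodym : nikodym_property phi).

Lemma nikodym_preimage_dense (V : set X) (x : X) :
  meagre_op open (~` V) -> dense_op (@norm_open R G) [set g | V (phi g x)].
Proof.
move=> mV O oO [h Oh]; apply/not_existsP => OVx.
have O'1 : [set g | O (ng_mul g h)] (ng_one G) by rewrite /= ng_mul1g.
have [B [BO' [nmB _]]] := phi_nikodym (norm_open_mulr (h := h) oO) O'1 (phi h x).
apply/nmB/(meagre_op_sub _ mV) => _ /BO' [u Ouh <-] Vuhx.
by apply: (OVx (ng_mul u h)); split => //=; rewrite phi_action.2.
Qed.

End NikodymAction.

Theorem proposition3 (R : realType) (X : metricType R) (G : normedGroup R)
  (phi : G -> X -> X) (T : set X) :
  ~ meagre_op open T -> baire_property_op open T ->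
  baire_space_op (@norm_open R G) ->
  is_action phi -> separately_continuous phi -> transitive_action phi ->
  nikodym_property phi ->
  forall (x : nat -> X) (x0 : X), x @ \oo --> x0 ->
  exists (tau : G) (N : nat),
    T (phi tau x0) /\ forall n, (N < n)%N -> T (phi tau (x n)).
Proof.
move=> nmT [U [oU [F [ndF TUF]]]] baireG act [contg contx] trans nik x x0 xx0.
pose y (i : option nat) := if i is Some n then x n else x0.
pose C k := interior_op open (~` F k).
have UT p : U p -> (forall k, C k p) -> T p.
  move=> Up Cp; apply: contrapT => nTp.
  have [k _ Fkp] := TUF p (or_intror (conj Up nTp)).
  exact: interior_op_sub (Cp k) Fkp.
have [u Uu] : U !=set0.
  apply/set0P/eqP => U0; apply: nmT; exists F; split => // t Tt.
  by apply: TUF; left; rewrite U0 setD0.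
have [g0 g0x0] := trans x0 u.
have [tau [Utaux0 Ctau]] :
    ([set g | U (phi g x0)] `&`
     \bigcap_(ik : option nat * nat) [set g | C ik.2 (phi g (y ik.1))]) !=set0.
  apply: (baire_dense_bigcap (@norm_open_setT _ G) baireG).
  - move=> [i k]; split; first by apply: contx; apply: open_interior_op.
    apply: (nikodym_preimage_dense act nik); apply: nowhere_dense_meagre_op.
    exact: nowhere_dense_closure_op.
  - exact: contx.
  - by exists g0; rewrite /= g0x0.
have [N _ UtauxN] : \forall n \near \oo, U (phi tau (x n)).
  by apply: (cvg_comp _ _ xx0 (contg tau x0)); apply: open_nbhs_nbhs.
exists tau, N; split; first by apply: UT => // k; apply: (Ctau (None, k)).
move=> n Nn; apply: UT; first by apply: UtauxN; rewrite /= ltnW.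
by move=> k; apply: (Ctau (Some n, k)).
Qed.
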